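(* Let $\sigma$ be a finite relational signature, let $\varphi=\forall x_1\exists y_1\cdots\forall x_k\exists y_k\,P(x_1,y_1,\dots,x_k,y_k)$ be a positive Horn sentence with $P$ a conjunction of atomic $\sigma$-formulas containing no equalities, and let $\psi$ be a positive Horn sentence over $\sigma$. Then $\varphi\rightarrow\psi$ is logically valid (true in every $\sigma$-structure) if and only if $\mathcal{T}_\varphi(C_\omega)\models\psi$.
   Context: Positive Horn sentences are first-order sentences built from atoms using only $\exists,\forall,\wedge$. Let $f_1,\dots,f_k$ be new function symbols, $f_i$ of arity $i$, and $\mathrm{Sk}(\varphi)=\forall x_1\cdots\forall x_k\,P(x_1,f_1(x_1),\dots,x_k,f_k(x_1,\dots,x_k))$. Let $C_\omega=\{c_1,c_2,\dots\}$ be countably many new constants and $T_\varphi(C_\omega)$ the set of closed terms built from $C_\omega$ with $f_1,\dots,f_k$. The canonical model $\mathcal{T}_\varphi(C_\omega)$ is the $\sigma$-structure with domain $T_\varphi(C_\omega)$ in which $R(t_1,\dots,t_p)$ holds iff it is obtained from an atom of the matrix of $\mathrm{Sk}(\varphi)$ by substituting terms of $T_\varphi(C_\omega)$ for $x_1,\dots,x_k$. *)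

From mathcomp Require Import all_boot.
From Stdlib Require List.

Set Implicit Arguments.
Unset Strict Implicit.
Unset Printing Implicit Defensive.

Section FO.

Variable S : finType.
Variable ar : S -> nat.

Inductive phf : Type :=
| PAtom : forall R : S, ('I_(ar R) -> nat) -> phf
| PEq   : nat -> nat -> phf
| PAnd  : phf -> phf -> phf
| PEx   : nat -> phf -> phf
| PAll  : nat -> phf -> phf.

Fixpoint fv (f : phf) : seq nat :=
  match f with
  | PAtom R a => [seq a j | j <- enum 'I_(ar R)]
  | PEq x y => [:: x; y]
  | PAnd f g => fv f ++ fv g
  | PEx x f => [seq y <- fv f | y != x]
  | PAll x f => [seq y <- fv f | y != x]
  end.

Definition sentence (f : phf) : Prop := fv f = [::].

(* sigma-structures (with nonempty domain, as usual in first-order logic). *)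
Record structure : Type := Structure {
  dom :> Type;
  point : dom;
  rel : forall R : S, ('I_(ar R) -> dom) -> Prop
}.

Definition upd (D : Type) (e : nat -> D) (x : nat) (d : D) : nat -> D :=
  fun y => if y == x then d else e y.

Fixpoint sat (M : structure) (e : nat -> M) (f : phf) : Prop :=
  match f with
  | PAtom R a => rel (R:=R) (fun j => e (a j))
  | PEq x y => e x = e y
  | PAnd f g => sat e f /\ sat e g
  | PEx x f => exists d : M, sat (upd e x d) f
  | PAll x f => forall d : M, sat (upd e x d) f
  end.

Definition models (M : structure) (f : phf) : Prop := forall e : nat -> M, sat e f.

Definition valid_impl (phi psi : phf) : Prop :=
  forall M : structure, models M phi -> models M psi.

(* Variables of the matrix: inl i = x_{i+1}, inr i = y_{i+1}  (i : 'I_k). *)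
Definition pvar (k : nat) := ('I_k + 'I_k)%type.

Definition patom (k : nat) := {R : S & 'I_(ar R) -> pvar k}.

(* Encoding of x_{i+1} as variable 2i and y_{i+1} as 2i+1. *)
Definition pvar_code k (v : pvar k) : nat :=
  match v with inl i => (nat_of_ord i).*2 | inr i => (nat_of_ord i).*2.+1 end.

Definition patom_formula k (a : patom k) : phf :=
  PAtom (fun j => pvar_code (projT2 a j)).

Definition matrix k (P : seq (patom k)) : phf :=
  match P with
  | [::] => PEq 0 0 (* unused: P is assumed nonempty *)
  | a :: l => foldr (fun b f => PAnd f (patom_formula b)) (patom_formula a) l
  end.

Definition phi_formula k (P : seq (patom k)) : phf :=
  foldr (fun i f => PAll i.*2 (PEx i.*2.+1 f)) (matrix P) (iota 0 k).

(* Closed terms over constants C_omega = {c_0, c_1, ...} and Skolem functions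
   f_1, ..., f_k; App i args is f_{i+1}(args) with arity i+1. *)
Inductive term (k : nat) : Type :=
| Const : nat -> term k
| App : forall i : 'I_k, ('I_(i.+1) -> term k) -> term k.

(* Value of a matrix variable under the Skolemization, after substituting
   terms s i for x_{i+1}: x_{i+1} |-> s i, y_{i+1} |-> f_{i+1}(s 0, ..., s i). *)
Definition skval k (s : 'I_k -> term k) (v : pvar k) : term k :=
  match v with
  | inl i => s i
  | inr i => App (fun j : 'I_(i.+1) => s (widen_ord (ltn_ord i) j))
  end.

(* R(t_1..t_p) holds iff it is obtained from an atom of the matrix of Sk(phi)
   by substituting closed terms for x_1, ..., x_k. *)
Definition canon_rel k (P : seq (patom k)) (R : S) (t : 'I_(ar R) -> term k) : Prop :=
  exists (a : 'I_(ar R) -> pvar k) (s : 'I_k -> term k),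
    List.In (existT _ R a) P /\ t = (fun j => skval s (a j)).

Definition canonical_model k (P : seq (patom k)) : structure :=
  @Structure (term k) (Const k 0) (@canon_rel k P).

End FO.

(* The sentence phi holds in a structure M exactly when M carries Skolem
   functions f_1, ..., f_k making the matrix P true for every choice of the
   universal variables. The canonical model carries them tautologically, as
   its function symbols, so it satisfies phi. Conversely, Skolem functions of
   a model M of phi interpret every closed term of T_phi(C_omega); this
   evaluation preserves the relations of the canonical model, hence it
   transfers positive Horn formulas from the canonical model to M. The only
   non-homomorphic step is a universal quantifier, which is handled by
   instantiating it in the canonical model with a constant c_m not occurring
   in the current assignment and sending c_m to the desired element of M. *)
From Pilot Require Import Defs.
From mathcomp Require Import all_boot.
From Stdlib Require Import ClassicalEpsilon FunctionalExtensionality.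
From Stdlib Require List.

Set Implicit Arguments.
Unset Strict Implicit.
Unset Printing Implicit Defensive.

Lemma upd_same (D : Type) (e : nat -> D) x d : upd e x d x = d.
Proof. by rewrite /upd eqxx. Qed.

Lemma upd_other (D : Type) (e : nat -> D) x y d : y != x -> upd e x d y = e y.
Proof. by rewrite /upd => /negbTE ->. Qed.

Lemma odd_neq_double i j : j.*2.+1 != i.*2.
Proof. by apply/eqP => /(congr1 odd); rewrite /= !odd_double. Qed.

Definition ord_extend (T : Type) (d : T) n (g : 'I_n -> T) (j : nat) : T :=
  if insub j is Some o then g o else d.

Lemma ord_extendE (T : Type) (d : T) n (g : 'I_n -> T) j (lt_jn : j < n) :
  ord_extend d g j = g (Ordinal lt_jn).
Proof. by rewrite /ord_extend insubT; congr g; apply: val_inj. Qed.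

Lemma ord_extend_ord (T : Type) (d : T) n (g : 'I_n -> T) (i : 'I_n) :
  ord_extend d g i = g i.
Proof. by rewrite /ord_extend valK. Qed.

Section CanonicalModel.

Variables (S : finType) (ar : S -> nat) (k : nat) (P : seq (patom ar k)).

Definition qprefix (i : nat) : phf ar :=
  foldr (fun j f => PAll j.*2 (PEx j.*2.+1 f)) (matrix P) (iota i (k - i)).

Lemma qprefix0 : qprefix 0 = phi_formula P.
Proof. by rewrite /qprefix subn0. Qed.

Lemma qprefix_matrix : qprefix k = matrix P.
Proof. by rewrite /qprefix subnn. Qed.

Lemma qprefixS i : i < k -> qprefix i = PAll i.*2 (PEx i.*2.+1 (qprefix i.+1)).
Proof. by move=> lt_ik; rewrite /qprefix -subnSK. Qed.

Lemma sat_conj (M : structure ar) (e : nat -> M) (a : patom ar k) l :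
  sat e (foldr (fun b f => PAnd f (patom_formula b)) (patom_formula a) l) <->
  forall b, List.In b (a :: l) -> sat e (patom_formula b).
Proof.
elim: l => [|b l IHl] /=.
  by split=> [sat_a b /= [<- | []] | sat_all] //; apply: sat_all; left.
rewrite IHl; split=> [[sat_l sat_b] c /= [<- | [<- | c_l]] | sat_all] //.
- by apply: sat_l; left.
- by apply: sat_l; right.
by split=> [c /= [<- | c_l] |]; apply: sat_all; [left | right; right | right; left].
Qed.

Lemma sat_matrix (M : structure ar) (e : nat -> M) :
  sat e (matrix P) <-> forall a, List.In a P -> sat e (patom_formula a).
Proof. by case: P => [|a l]; [split | exact: sat_conj]. Qed.

Lemma sat_matrix_agree (M : structure ar) (e e' : nat -> M) :
  (forall v : pvar k, e (pvar_code v) = e' (pvar_code v)) ->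
  sat e (matrix P) -> sat e' (matrix P).
Proof.
move=> ee'; rewrite !sat_matrix => He [R a] /He /=.
suff -> : (fun j => e' (pvar_code (a j))) = (fun j => e (pvar_code (a j))) by [].
by apply: functional_extensionality => j.
Qed.

Definition skolem_funs (M : Type) := forall i : 'I_k, ('I_i.+1 -> M) -> M.

Section Skolem.

Variables (M : structure ar) (F : skolem_funs M).

(* x_{i+1} |-> x i and y_{i+1} |-> f_{i+1}(x 0, ..., x i); odd variables
   beyond y_k get an arbitrary value. *)
Definition skolem_env (x : nat -> M) (n : nat) : M :=
  if odd n then
    match insub n./2 : option 'I_k with
    | Some i => F (fun j : 'I_i.+1 => x j)
    | None => x n
    end
  else x n./2.

Lemma skolem_env_double x i : skolem_env x i.*2 = x i.
Proof. by rewrite /skolem_env odd_double doubleK. Qed.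

Lemma skolem_env_doubleS x (i : 'I_k) :
  skolem_env x i.*2.+1 = F (fun j : 'I_i.+1 => x j).
Proof.
rewrite /skolem_env /= odd_double /= uphalf_double insubT // => lt_ik.
by rewrite (_ : Sub (val i) lt_ik = i) //; apply: val_inj.
Qed.

Definition skolem_closed (n : nat) (e : nat -> M) : Prop :=
  forall i : 'I_k, i < n -> e i.*2.+1 = F (fun j : 'I_i.+1 => e j.*2).

Lemma skolem_closed_agree e x :
  skolem_closed k e -> (forall j, j < k -> e j.*2 = x j) ->
  forall v : pvar k, e (pvar_code v) = skolem_env x (pvar_code v).
Proof.
move=> closed_e ex [i | i] /=; first by rewrite skolem_env_double ex.
rewrite skolem_env_doubleS closed_e //; congr F; apply: functional_extensionality.
by move=> j; apply: ex; apply: leq_trans (ltn_ord i).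
Qed.

Lemma skolem_closedS i (lt_ik : i < k) e d :
  skolem_closed i e ->
  let e' := upd e i.*2 d in
  skolem_closed i.+1 (upd e' i.*2.+1 (F (fun j : 'I_(Ordinal lt_ik).+1 => e' j.*2))).
Proof.
move=> closed_e e' j; rewrite ltnS leq_eqVlt => /orP[/eqP ji | lt_ji].
  have {ji} -> : j = Ordinal lt_ik by apply: val_inj.
  rewrite upd_same; congr F; apply: functional_extensionality => j'.
  by rewrite upd_other // eq_sym odd_neq_double.
have ne_ji : j != i :> nat by rewrite ltn_eqF.
rewrite upd_other ?eqSS ?(inj_eq double_inj) // /e' upd_other ?odd_neq_double //.
rewrite closed_e //; congr F; apply: functional_extensionality => j'.
rewrite upd_other 1?eq_sym ?odd_neq_double // upd_other ?(inj_eq double_inj) //.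
by rewrite ltn_eqF // (leq_trans _ lt_ji) // -ltnS.
Qed.

Hypothesis sat_skolem : forall x, sat (skolem_env x) (matrix P).

Lemma sat_qprefix i e : i <= k -> skolem_closed i e -> sat e (qprefix i).
Proof.
move=> le_ik; rewrite -(subKn le_ik); elim: (k - i) (leq_subr i k) e.
  move=> _ e; rewrite subn0 qprefix_matrix => closed_e.
  apply: sat_matrix_agree (sat_skolem (fun j => e j.*2)) => v.
  by rewrite (skolem_closed_agree closed_e (x := fun j => e j.*2)).
move=> n IHn le_nk e closed_e.
have lt_ik : k - n.+1 < k by rewrite -subSn // subSS leq_subr.
have succ_i : (k - n.+1).+1 = k - n by rewrite subnSK.
rewrite qprefixS // => d /=.
exists (F (fun j : 'I_(Ordinal lt_ik).+1 => upd e (k - n.+1).*2 d j.*2)).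
have := IHn (ltnW le_nk); rewrite -succ_i; apply.
exact: skolem_closedS.
Qed.

Lemma models_phi_skolem : models M (phi_formula P).
Proof. by move=> e; rewrite -qprefix0; apply: sat_qprefix. Qed.

End Skolem.

Section Choice.

Variable M : structure ar.
Hypothesis M_phi : models M (phi_formula P).

Fixpoint choice_env (x : nat -> M) (i : nat) : nat -> M :=
  if i is i'.+1 then
    let e := upd (choice_env x i') i'.*2 (x i') in
    upd e i'.*2.+1
      (epsilon (inhabits (point M)) (fun y => sat (upd e i'.*2.+1 y) (qprefix i)))
  else fun _ => point M.

Lemma sat_choice_env x i : i <= k -> sat (choice_env x i) (qprefix i).
Proof.
elim: i => [_ | i IHi lt_ik]; first by rewrite qprefix0.
have := IHi (ltnW lt_ik); rewrite qprefixS //= => /(_ (x i)) exists_y.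
exact: epsilon_spec exists_y.
Qed.

Lemma eq_choice_env x x' i :
  (forall j, j < i -> x j = x' j) -> choice_env x i = choice_env x' i.
Proof.
elim: i => [// | i IHi] xx' /=.
by rewrite IHi ?xx' // => j lt_ji; apply/xx'/ltnW.
Qed.

Lemma choice_env_val x i j : j < i ->
  choice_env x i j.*2 = x j /\ choice_env x i j.*2.+1 = choice_env x j.+1 j.*2.+1.
Proof.
elim: i => [// | i IHi]; rewrite ltnS leq_eqVlt => /orP[/eqP -> | lt_ji].
  by rewrite /= upd_other ?upd_same // eq_sym odd_neq_double.
have ne_ji : j != i by rewrite ltn_eqF.
rewrite [choice_env x i.+1]/= !upd_other ?odd_neq_double ?eqSS ?(inj_eq double_inj) //.
  exact: IHi lt_ji.
by rewrite eq_sym odd_neq_double.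
Qed.

Definition choice_skolem : skolem_funs M :=
  fun i g => choice_env (ord_extend (point M) g) i.+1 i.*2.+1.

Lemma skolem_closed_choice_env x : skolem_closed choice_skolem k (choice_env x k).
Proof.
move=> i lt_ik; rewrite (proj2 (choice_env_val x lt_ik)) /choice_skolem.
rewrite (@eq_choice_env (ord_extend (point M) _) x) // => j lt_ji.
by rewrite ord_extendE /= (proj1 (choice_env_val x (leq_trans lt_ji lt_ik))).
Qed.

Lemma skolem_choice x : sat (skolem_env choice_skolem x) (matrix P).
Proof.
have := sat_choice_env x (leqnn k); rewrite qprefix_matrix.
apply: sat_matrix_agree; apply: skolem_closed_agree (skolem_closed_choice_env x) _.
by move=> j lt_jk; rewrite (proj1 (choice_env_val x lt_jk)).
Qed.

End Choice.

Theorem skolem_normal_form (M : structure ar) :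
  models M (phi_formula P) <->
  exists F : skolem_funs M, forall x, sat (skolem_env F x) (matrix P).
Proof.
split=> [M_phi | [F sat_F]]; last exact: models_phi_skolem sat_F.
by eexists; apply: skolem_choice M_phi.
Qed.

Lemma canonical_models_phi : models (canonical_model P) (phi_formula P).
Proof.
apply/skolem_normal_form; exists (@App k) => x; apply/sat_matrix => -[R a] a_P /=.
exists a, (fun i => x i); split=> //; apply: functional_extensionality => j.
by case: (a j) => i; rewrite /= ?skolem_env_double ?skolem_env_doubleS.
Qed.

Section Evaluation.

Variables (M : structure ar) (F : skolem_funs M).
Hypothesis sat_F : forall x, sat (skolem_env F x) (matrix P).

Fixpoint term_eval (c : nat -> M) (t : term k) : M :=
  match t with
  | Const n => c n
  | App i f => F (fun j => term_eval c (f j))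
  end.

Lemma rel_term_eval c R (t : 'I_(ar R) -> term k) :
  canon_rel P t -> Defs.rel (s := M) (fun j => term_eval c (t j)).
Proof.
move=> [a [s [a_P ->]]].
have := sat_F (ord_extend (point M) (fun i => term_eval c (s i))).
move/sat_matrix/(_ _ a_P) => /=; congr Defs.rel; apply: functional_extensionality => j.
case: (a j) => i /=; first by rewrite skolem_env_double ord_extend_ord.
rewrite skolem_env_doubleS; congr F; apply: functional_extensionality => j' /=.
by rewrite (ord_extend_ord _ _ (widen_ord (ltn_ord i) j')).
Qed.

Fixpoint const_bound (t : term k) : nat :=
  match t with
  | Const n => n.+1
  | App i f => \max_(j < i.+1) const_bound (f j)
  end.

Lemma term_eval_upd c m d t :
  const_bound t <= m -> term_eval (upd c m d) t = term_eval c t.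
Proof.
elim: t => [n | i f IHf] /= bound_t; first by rewrite upd_other // ltn_eqF.
congr F; apply: functional_extensionality => j; apply: IHf.
exact: leq_trans (leq_bigmax j) bound_t.
Qed.

Lemma sat_term_eval (f : phf ar) c (eT : nat -> term k) (eM : nat -> M) :
  (forall y, y \in fv f -> term_eval c (eT y) = eM y) ->
  sat (M := canonical_model P) eT f -> sat eM f.
Proof.
elim: f c eT eM => [R a | x y | f IHf g IHg | x f IHf | x f IHf] c eT eM agree /=.
- move/(rel_term_eval c); congr Defs.rel; apply: functional_extensionality => j.
  by apply: agree; apply: map_f; rewrite mem_enum.
- by move=> exy; rewrite -!agree ?exy //= !inE eqxx ?orbT.
- by move=> [sat_f sat_g]; split; [apply: IHf sat_f | apply: IHg sat_g];
    move=> y y_fv; apply: agree; rewrite /= mem_cat y_fv ?orbT.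
- move=> [t sat_t]; exists (term_eval c t); apply: IHf sat_t => y y_fv.
  have [-> | ne_yx] := eqVneq y x; first by rewrite !upd_same.
  by rewrite !upd_other //; apply: agree; rewrite /= mem_filter ne_yx.
- pose m := \max_(y <- fv (PAll x f)) const_bound (eT y).
  move=> sat_all d; apply: (IHf (upd c m d) _ _ _ (sat_all (Const k m))) => y y_fv.
  have [-> | ne_yx] := eqVneq y x; first by rewrite !upd_same /= upd_same.
  have y_fv' : y \in fv (PAll x f) by rewrite /= mem_filter ne_yx.
  rewrite !upd_other // term_eval_upd; first exact: agree.
  exact: leq_bigmax_seq.
Qed.

End Evaluation.

End CanonicalModel.

Theorem mainTheorem10 (S : finType) (ar : S -> nat)
  (k : nat) (P : seq (patom ar k)) (psi : phf ar) :
  P <> [::] ->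
  sentence psi ->
  valid_impl (phi_formula P) psi <-> models (canonical_model P) psi.
Proof.
move=> _ psi_closed; split=> [valid | canon_psi M M_phi e].
  exact/valid/canonical_models_phi.
have [F sat_F] := (skolem_normal_form P M).1 M_phi.
apply: (sat_term_eval sat_F (c := fun _ => point M) (eT := fun _ => Const k 0)).
  by move=> y; rewrite psi_closed.
exact: canon_psi.
Qed.
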